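(* Let $q=\chi^{-1}(a)$ and let $m$ be an integer with $0\le m<|q|$ (where $|q|\in\{2,3,\dots\}\cup\{\infty\}$ is the order of $q$). Then $$V_2(\varepsilon)^{\otimes m}\cong\bigoplus_{i=0}^{[\frac m2]}\frac{m-2i+1}{m-i+1}\binom{m}{i}V_{m+1-2i}(\chi^i).$$
   Context: Let $k$ be an algebraically closed field of characteristic zero, $G$ a group, $a$ a central element of $G$, $\hat G$ the group of characters $G\to k^\times$ with identity $\varepsilon$, and $\chi\in\hat G$ with $\chi(a)\ne1$. $H=kG(\chi^{-1},a,0)$ is the Hopf algebra generated by the group $G$ and $x$ with $xg=\chi^{-1}(g)gx$, $\Delta(g)=g\otimes g$, $\Delta(x)=x\otimes a+1\otimes x$; tensor products of $H$-modules: $g(m\otimes n)=gm\otimes gn$, $x(m\otimes n)=xm\otimes an+m\otimes xn$. $V_t(\lambda)$ ($\lambda\in\hat G$, $t\ge1$) has basis $m_0,\dots,m_{t-1}$, $gm_i=\chi^i(g)\lambda(g)m_i$, $xm_i=m_{i+1}$ ($i\le t-2$), $xm_{t-1}=0$. $V^{\otimes 0}=V_1(\varepsilon)$ and $V^{\otimes m}$ is the $m$-fold tensor power; $[r]$ is the integer part; $cM$ denotes the direct sum of $c$ copies of $M$ (the coefficients here are nonnegative integers). *)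

From HB Require Import structures.
From mathcomp Require Import all_boot all_order all_algebra.

Set Implicit Arguments.
Unset Strict Implicit.
Unset Printing Implicit Defensive.

Import GRing.Theory.
Local Open Scope ring_scope.

(* Modules over H = kG(chi^{-1}, a, 0), represented concretely:
   a (finite-dimensional) module is a dimension d, the action of each
   group element g as a d x d matrix, and the action of x as a d x d matrix.
   Convention: matrices act on COLUMN vectors (v |-> A *m v), so the
   i-th basis vector is the i-th standard column vector. *)

Section HopfModules.

Variables (k : fieldType) (G : groupType) (a : G) (chi : G -> k).

Definition is_char (l : G -> k) : Prop :=
  (forall g h : G, l (g * h)%g = l g * l h) /\ (forall g : G, l g != 0).

Definition eps : G -> k := fun _ => 1.

Record hmod := HMod {
  hdim : nat;
  hact : G -> 'M[k]_hdim;
  hx   : 'M[k]_hdim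
}.

(* Kronecker product, basis e_i (x) f_j indexed via mxvec_index i j *)
Definition kron m1 n1 m2 n2 (A : 'M[k]_(m1, n1)) (B : 'M[k]_(m2, n2))
  : 'M[k]_(m1 * m2, n1 * n2) :=
  \matrix_(r, c)
    (let ij := enum_val (cast_ord (esym (mxvec_cast m1 m2)) r) in
     let kl := enum_val (cast_ord (esym (mxvec_cast n1 n2)) c) in
     A ij.1 kl.1 * B ij.2 kl.2).

(* Tensor product: g(m (x) n) = gm (x) gn,  x(m (x) n) = xm (x) an + m (x) xn *)
Definition htens (M N : hmod) : hmod :=
  @HMod (hdim M * hdim N)
    (fun g => kron (hact M g) (hact N g))
    (kron (hx M) (hact N a) + kron 1%:M (hx N)).

Definition hdsum (M N : hmod) : hmod :=
  @HMod (hdim M + hdim N)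
    (fun g => block_mx (hact M g) 0 0 (hact N g))
    (block_mx (hx M) 0 0 (hx N)).

Definition hzero : hmod := @HMod 0 (fun _ => 0) 0.

Definition hdsum_seq (s : seq hmod) : hmod := foldr hdsum hzero s.

Definition hcopies (c : nat) (M : hmod) : hmod := hdsum_seq (nseq c M).

(* V_t(lambda): basis m_0..m_{t-1}, g m_i = chi^i(g) lambda(g) m_i,
   x m_i = m_{i+1} (i <= t-2), x m_{t-1} = 0 *)
Definition Vmod (t : nat) (l : G -> k) : hmod :=
  @HMod t
    (fun g => \matrix_(i < t, j < t)
                (if i == j then chi g ^+ i * l g else 0))
    (\matrix_(i < t, j < t) ((i : nat) == j.+1)%:R).

Fixpoint htpow (V : hmod) (n : nat) : hmod :=
  match n with
  | 0 => Vmod 1 eps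
  | n'.+1 => htens (htpow V n') V
  end.

Definition hiso (M N : hmod) : Prop :=
  exists (P : 'M[k]_(hdim N, hdim M)) (Q : 'M[k]_(hdim M, hdim N)),
    [/\ Q *m P = 1%:M, P *m Q = 1%:M,
        (forall g : G, P *m hact M g = hact N g *m P)
      & P *m hx M = hx N *m P].

End HopfModules.

From HB Require Import structures.
From mathcomp Require Import all_boot all_order all_algebra.
From mathcomp Require Import zify ring.

(* Write p = chi a = q^-1 and [n] = 1 + p + ... + p^(n-1).  A string of length t
   and weight w in a module M is a vector v with x^t v = 0 such that every x^j v
   has weight chi^(w+j); the vectors x^j v (j < t) are then the image of the basis
   of V_t(chi^w) under a module map.  Tensoring with V = V_2(eps), with basis
   e0, e1, splits a string (v, t, w) of M into the strings v (x) e0 of length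
   t+1 and p^(t-1) x v (x) e0 - [t-1] v (x) e1 of length t-1 and weight w+1; when
   p^t <> 1 their orbits span the orbit of v tensored with V.  Starting from the
   single string of V_1(eps), this gives strings spanning V^(x)m with total
   length 2^m = dim V^(x)m, and C(m,w) - C(m,w-1) of them of weight w, which is
   the coefficient in the statement.  Hence the map from the direct sum onto
   V^(x)m is an isomorphism. *)

Set Implicit Arguments.
Unset Strict Implicit.
Unset Printing Implicit Defensive.

Import GRing.Theory.

(* Truncated subtraction makes [ballot m w] vanish for 2w > m. *)
Definition ballot m w := 'C(m, w) - (if w is w'.+1 then 'C(m, w') else 0).

Lemma leq_binS m j : j.*2 < m -> 'C(m, j) <= 'C(m, j.+1).
Proof. by have := mul_bin_left m j; nia. Qed.

Lemma geq_binS m j : m <= j.*2.+1 -> 'C(m, j.+1) <= 'C(m, j).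
Proof. by have := mul_bin_left m j; nia. Qed.

Lemma ballot0 w : ballot 0 w = (w == 0).
Proof. by case: w => [|[|w]]. Qed.

Lemma ballotS0 m : ballot m.+1 0 = ballot m 0.
Proof. by rewrite /ballot !bin0. Qed.

Lemma ballotSS m w :
  ballot m.+1 w.+1 = ballot m w.+1 + (w.*2 < m) * ballot m w.
Proof.
have := @leq_binS m w; have := @geq_binS m w; have := @geq_binS m.+1 w.
case: w => [|w]; rewrite /ballot !binS ?bin0 ?bin1; first by lia.
by have := @leq_binS m w; have := @geq_binS m w; lia.
Qed.

Lemma ballot_div m i : i.*2 <= m ->
  ((m - 2 * i + 1) * 'C(m, i)) %/ (m - i + 1) = ballot m i.
Proof.
move=> le_im; suff -> : (m - 2 * i + 1) * 'C(m, i) = ballot m i * (m - i + 1).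
  by rewrite mulnK ?addn1.
case: i le_im => [|i] le_im; first by rewrite /ballot bin0; lia.
have := mul_bin_left m i; have := @leq_binS m i; rewrite /ballot; nia.
Qed.

Local Open Scope ring_scope.

Section Matrices.
Variable k : fieldType.

Lemma submx_solve2 m n (X Y : 'M[k]_(m, n)) p (W : 'M[k]_(p, n)) (al be ga : k) :
  ga - be * al != 0 ->
  ((X + al *: Y)%R <= W)%MS -> ((be *: X + ga *: Y)%R <= W)%MS ->
  (X <= W)%MS && (Y <= W)%MS.
Proof.
move=> det_neq0 sXY sXY'; rewrite -(eqmx_scale X det_neq0) -(eqmx_scale Y det_neq0).
have -> : (ga - be * al) *: X = ga *: (X + al *: Y) - al *: (be *: X + ga *: Y).
  by rewrite !scalerDr !scalerA scalerBl (mulrC al be) (mulrC al ga) opprD addrACA subrr addr0.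
have -> : (ga - be * al) *: Y = (be *: X + ga *: Y) - be *: (X + al *: Y).
  by rewrite !scalerDr !scalerA scalerBl opprD addrACA subrr add0r.
rewrite -!scaleN1r; apply/andP; split.
  exact: addmx_sub (scalemx_sub _ sXY) (scalemx_sub _ (scalemx_sub _ sXY')).
exact: addmx_sub sXY' (scalemx_sub _ (scalemx_sub _ sXY)).
Qed.

Lemma mxvec_index_eq m n (i i' : 'I_m) (j j' : 'I_n) :
  (mxvec_index i j == mxvec_index i' j') = (i == i') && (j == j').
Proof. by rewrite (inj_eq (@cast_ord_inj _ _ _)) (inj_eq enum_rank_inj). Qed.

Lemma kronE m1 n1 m2 n2 (A : 'M[k]_(m1, n1)) (B : 'M[k]_(m2, n2)) i j i' j' :
  kron A B (mxvec_index i j) (mxvec_index i' j') = A i i' * B j j'.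
Proof. by rewrite mxE /mxvec_index !cast_ordK !enum_rankK. Qed.

Lemma kron_mul m1 n1 p1 m2 n2 p2 (A : 'M[k]_(m1, n1)) (B : 'M[k]_(m2, n2))
    (C : 'M[k]_(n1, p1)) (D : 'M[k]_(n2, p2)) :
  kron A B *m kron C D = kron (A *m C) (B *m D).
Proof.
apply/matrixP => r c; case/mxvec_indexP: r => i j; case/mxvec_indexP: c => i' j'.
rewrite kronE !mxE (reindex _ (curry_mxvec_bij _ _)) big_distrl /=.
under [RHS]eq_bigr do rewrite big_distrr /=.
by rewrite pair_bigA; apply: eq_bigr => -[i1 j1] _; rewrite /= !kronE; ring.
Qed.

(* [kron] of two columns, retyped so that its column index is 'I_1 rather than
   'I_(1 * 1), which does not unify syntactically with it. *)
Definition kronv m n (u : 'cV[k]_m) (v : 'cV[k]_n) : 'cV[k]_(m * n) := kron u v.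

Lemma kronvE m n (u : 'cV[k]_m) (v : 'cV[k]_n) i j :
  kronv u v (mxvec_index i j) 0 = u i 0 * v j 0.
Proof.
have idx0 : (0 : 'I_1) = @mxvec_index 1 1 0 0 by rewrite [RHS]ord1; apply: val_inj.
by rewrite /kronv [in LHS]idx0; exact: kronE.
Qed.

Lemma kron_mulv m1 n1 m2 n2 (A : 'M[k]_(m1, n1)) (B : 'M[k]_(m2, n2)) u v :
  kron A B *m kronv u v = kronv (A *m u) (B *m v).
Proof. exact: (kron_mul (p1 := 1) (p2 := 1)). Qed.

Lemma kronvZl m n (c : k) (u : 'cV[k]_m) (v : 'cV[k]_n) :
  kronv (c *: u) v = c *: kronv u v.
Proof. by apply/colP => r; case/mxvec_indexP: r => i j; rewrite [RHS]mxE !kronvE mxE mulrA. Qed.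

Lemma kronvZr m n (c : k) (u : 'cV[k]_m) (v : 'cV[k]_n) :
  kronv u (c *: v) = c *: kronv u v.
Proof. by apply/colP => r; case/mxvec_indexP: r => i j; rewrite [RHS]mxE !kronvE mxE mulrCA. Qed.

Lemma kronv0l m n (v : 'cV[k]_n) : kronv (0 : 'cV[k]_m) v = 0.
Proof. by apply/colP => r; case/mxvec_indexP: r => i j; rewrite kronvE !mxE mul0r. Qed.

Lemma kronv0r m n (u : 'cV[k]_m) : kronv u (0 : 'cV[k]_n) = 0.
Proof. by apply/colP => r; case/mxvec_indexP: r => i j; rewrite kronvE !mxE mulr0. Qed.

Lemma kronv_delta m n (i : 'I_m) (j : 'I_n) :
  kronv (delta_mx i 0) (delta_mx j 0) = delta_mx (mxvec_index i j) 0.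
Proof.
apply/colP => r; case/mxvec_indexP: r => i' j'.
by rewrite kronvE !mxE !eqxx !andbT -natrM mulnb mxvec_index_eq.
Qed.

Definition kronr n p (e : 'cV[k]_p) : 'M[k]_(n, n * p) :=
  \matrix_(i, r) kronv (delta_mx i 0) e r 0.
Arguments kronr {n p} e.

Lemma mul_kronr n p (u : 'cV[k]_n) (e : 'cV[k]_p) :
  u^T *m kronr e = (kronv u e)^T.
Proof.
apply/rowP => r; case/mxvec_indexP: r => i b.
have kronrE i' : kronr e i' (mxvec_index i b) = (i == i')%:R * e b 0.
  by rewrite mxE kronvE !mxE andbT.
rewrite mxE [RHS]mxE kronvE (bigD1 i) //= big1 => [|i' ne_i'i].
  by rewrite kronrE !mxE eqxx mul1r addr0.
by rewrite kronrE eq_sym (negbTE ne_i'i) mul0r mulr0.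
Qed.

Lemma row_full_kronr m1 m2 n p (X : 'M[k]_(m1, n)) (Y : 'M[k]_(m2, n * p)) :
  (1%:M <= X)%MS -> (forall b, (X *m kronr (delta_mx b 0) <= Y)%MS) ->
  (1%:M <= Y)%MS.
Proof.
move=> fullX XY; apply/row_subP => r; case/mxvec_indexP: r => i b.
rewrite row1 -trmx_delta -kronv_delta -mul_kronr trmx_delta.
exact: submx_trans (submxMr _ (submx_trans (submx1 _) fullX)) (XY b).
Qed.
End Matrices.

Arguments kronr {k n p} e.

Lemma sum_over_fibres (T J : eqType) (S : seq T) (I : seq J) (f : T -> J)
    (F : T -> nat) :
  uniq I -> (forall s, s \in S -> f s \in I) ->
  (\sum_(s <- S) F s = \sum_(i <- I) \sum_(s <- S | f s == i) F s)%N.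
Proof.
move=> uI SI; rewrite (exchange_big_dep xpredT) //=; apply: eq_big_seq => s Ss.
rewrite -big_filter (@eq_filter _ _ (pred1 (f s))) => [|i]; last exact: eq_sym.
by rewrite filter_pred1_uniq ?SI // big_seq1.
Qed.

Record string (k : fieldType) n := String { svec : 'cV[k]_n; slen : nat; swt : nat }.

Definition string_triple (k : fieldType) n (s : string k n) := (svec s, slen s, swt s).
Definition triple_string (k : fieldType) n (t : 'cV[k]_n * nat * nat) := String t.1.1 t.1.2 t.2.
Lemma string_tripleK (k : fieldType) n : cancel (@string_triple k n) (@triple_string k n).
Proof. by case. Qed.
HB.instance Definition _ (k : fieldType) n :=
  Equality.copy (string k n) (can_type (@string_tripleK k n)).

Section Strings.
Variables (k : fieldType) (G : groupType) (chi : G -> k).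
Local Notation hmod := (hmod k G).

Definition mxiter n (A : 'M[k]_n) j (v : 'cV[k]_n) := iter j (mulmx A) v.

Lemma mxiterS n (A : 'M[k]_n) j v : mxiter A j.+1 v = A *m mxiter A j v.
Proof. by []. Qed.

Lemma mxiterSr n (A : 'M[k]_n) j v : mxiter A j.+1 v = mxiter A j (A *m v).
Proof. exact: iterSr. Qed.

Lemma mxiterD n (A : 'M[k]_n) j u v :
  mxiter A j (u + v) = mxiter A j u + mxiter A j v.
Proof. by elim: j => //= j IHj; rewrite IHj mulmxDr. Qed.

Lemma mxiterZ n (A : 'M[k]_n) j (c : k) v : mxiter A j (c *: v) = c *: mxiter A j v.
Proof. by elim: j => //= j IHj; rewrite IHj scalemxAr. Qed.

Lemma mxiter_eq0 n (A : 'M[k]_n) t j v :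
  mxiter A t v = 0 -> (t <= j)%N -> mxiter A j v = 0.
Proof.
rewrite /mxiter => Atv0 /subnK <-; rewrite iterD Atv0.
by elim: (j - t)%N => //= i ->; rewrite mulmx0.
Qed.

Definition weight_vec (M : hmod) (l : G -> k) (z : 'cV[k]_(hdim M)) :=
  forall g, hact M g *m z = l g *: z.
Arguments weight_vec : clear implicits.

Lemma weight_vecD M l z1 z2 :
  weight_vec M l z1 -> weight_vec M l z2 -> weight_vec M l (z1 + z2).
Proof. by move=> wz1 wz2 g; rewrite mulmxDr wz1 wz2 scalerDr. Qed.

Lemma weight_vecZ M l (c : k) z : weight_vec M l z -> weight_vec M l (c *: z).
Proof. by move=> wz g; rewrite -scalemxAr wz !scalerA mulrC. Qed.

Definition is_string (M : hmod) (s : string k (hdim M)) :=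
  mxiter (hx M) (slen s) (svec s) = 0 /\
  forall j, weight_vec M (fun g => chi g ^+ (swt s + j)) (mxiter (hx M) j (svec s)).

Definition string_mx (M : hmod) (s : string k (hdim M)) : 'M[k]_(hdim M, slen s) :=
  \matrix_(i, j) mxiter (hx M) j (svec s) i 0.

Definition string_span (M : hmod) (S : seq (string k (hdim M))) : 'M[k]_(hdim M) :=
  (\sum_(s <- S) <<(string_mx s)^T>>)%MS.

(* Q maps N into M: matrices act on column vectors. *)
Definition hmod_hom (N M : hmod) (Q : 'M[k]_(hdim M, hdim N)) :=
  hx M *m Q = Q *m hx N /\ forall g, hact M g *m Q = Q *m hact N g.
Arguments hmod_hom : clear implicits.

Lemma string_hom (M : hmod) (s : string k (hdim M)) : is_string s ->
  hmod_hom (Vmod chi (slen s) (fun g => chi g ^+ swt s)) M (string_mx s).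
Proof.
case: s => v t w [/= xtv0 wv]; split => [|g]; apply/matrixP => i j.
  have -> : (hx M *m string_mx (String v t w)) i j = mxiter (hx M) j.+1 v i 0.
    by rewrite !mxE; apply: eq_bigr => r _; rewrite mxE.
  rewrite [RHS]mxE; case: (ltnP j.+1 t) => [lt_j1t | le_tj1].
    rewrite (bigD1 (Ordinal lt_j1t)) //= big1 => [|r ne_r]; rewrite !mxE.
      by rewrite eqxx mulr1 addr0.
    by move: ne_r; rewrite -val_eqE /= => /negbTE ->; rewrite mulr0.
  rewrite (mxiter_eq0 xtv0 le_tj1) [LHS]mxE big1 // => r _; rewrite !mxE.
  by rewrite ltn_eqF ?mulr0 // (leq_trans (ltn_ord r) le_tj1).
have -> : (hact M g *m string_mx (String v t w)) i j = (hact M g *m mxiter (hx M) j v) i 0.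
  by rewrite !mxE; apply: eq_bigr => r _; rewrite mxE.
rewrite wv [RHS]mxE (bigD1 j) //= big1 => [|r ne_rj]; rewrite !mxE /=.
  by rewrite eqxx addr0 exprD; ring.
by rewrite ifN ?mulr0.
Qed.

Lemma hom_dsum (M N1 N2 : hmod) Q1 Q2 :
  hmod_hom N1 M Q1 -> hmod_hom N2 M Q2 -> hmod_hom (hdsum N1 N2) M (row_mx Q1 Q2).
Proof.
move=> [xQ1 gQ1] [xQ2 gQ2]; split => [|g] /=;
  by rewrite mul_mx_row mul_row_block !mulmx0 addr0 add0r ?xQ1 ?xQ2 ?gQ1 ?gQ2.
Qed.

Lemma hom_zero (M : hmod) : hmod_hom (hzero k G) M 0.
Proof. by split => [|g]; rewrite !thinmx0. Qed.

Lemma string_span_cons (M : hmod) s (S : seq (string k (hdim M))) :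
  string_span (s :: S) = (<<(string_mx s)^T>> + string_span S)%MS.
Proof. exact: big_cons. Qed.

Lemma string_span_mem (M : hmod) (S : seq (string k (hdim M))) s :
  s \in S -> ((string_mx s)^T <= string_span S)%MS.
Proof.
elim: S => // s' S IHS; rewrite in_cons string_span_cons => /predU1P[-> | /IHS].
  by rewrite -(genmxE (_^T)) addsmxSl.
by move/submx_trans; apply; apply: addsmxSr.
Qed.

Lemma string_span_mulr_sub (M : hmod) (S : seq (string k (hdim M))) n
    (F : 'M[k]_(hdim M, n)) m (X : 'M[k]_(m, n)) :
  (forall s, s \in S -> ((string_mx s)^T *m F <= X)%MS) ->
  (string_span S *m F <= X)%MS.
Proof.
elim: S => [|s S IHS] SFX; first by rewrite /string_span big_nil mul0mx sub0mx.
rewrite string_span_cons addsmxMr addsmx_sub (eqmxMr _ (genmxE _)) SFX ?mem_head //=.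
by apply: IHS => s' S's'; apply: SFX; rewrite in_cons S's' orbT.
Qed.

Lemma string_span_subset (M : hmod) (S1 S2 : seq (string k (hdim M))) :
  {subset S1 <= S2} -> (string_span S1 <= string_span S2)%MS.
Proof.
move=> sS12; rewrite -[string_span S1]mulmx1; apply: string_span_mulr_sub => s /sS12.
by rewrite mulmx1; apply: string_span_mem.
Qed.

Lemma mxiter_string_span (M : hmod) (S : seq (string k (hdim M))) s j :
  s \in S -> (j < slen s)%N -> ((mxiter (hx M) j (svec s))^T <= string_span S)%MS.
Proof.
move=> Ss lt_js; apply: submx_trans (string_span_mem Ss).
have -> : (mxiter (hx M) j (svec s))^T = row (Ordinal lt_js) (string_mx s)^T.
  by apply/rowP => i; rewrite !mxE.
exact: row_sub.
Qed.

Lemma hom_dsum_seq (M : hmod) (X : eqType) (L : seq X) (N : X -> hmod)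
    (S_ : X -> seq (string k (hdim M))) :
  (forall x, x \in L -> exists2 Q : 'M_(hdim M, hdim (N x)),
      hmod_hom (N x) M Q & (string_span (S_ x) <= Q^T)%MS) ->
  exists2 Q : 'M_(hdim M, hdim (hdsum_seq (map N L))),
    hmod_hom _ M Q & (string_span (flatten (map S_ L)) <= Q^T)%MS.
Proof.
elim: L => [|x L IHL] homL.
  by exists 0; [exact: hom_zero | rewrite /string_span big_nil sub0mx].
have [Q homQ spanQ] := IHL (fun y Ly => homL y (mem_behead (Ly : y \in behead (x :: L)))).
have [Qx homQx spanQx] := homL x (mem_head x L).
exists (row_mx Qx Q); first exact: hom_dsum.
by rewrite /string_span big_cat -/(string_span _) tr_row_mx -addsmxE addsmxS.
Qed.

Lemma hom_copies (M : hmod) (S : seq (string k (hdim M))) t w :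
  (forall s, s \in S -> [/\ is_string s, slen s = t & swt s = w]) ->
  exists2 Q : 'M_(hdim M, hdim (hcopies (size S) (Vmod chi t (fun g => chi g ^+ w)))),
    hmod_hom _ M Q & (string_span S <= Q^T)%MS.
Proof.
move=> strS; rewrite /hcopies -[S in string_span S]map_id -flatten_map1.
rewrite (_ : nseq _ _ = map (fun=> Vmod chi t (fun g => chi g ^+ w)) S);
  last by elim: S {strS} => //= s S <-.
apply: hom_dsum_seq => s /strS[str_s <- <-].
exists (string_mx s); first exact: string_hom.
by rewrite string_span_cons /string_span big_nil addsmx0 genmxE.
Qed.

Lemma iso_of_hom (M N : hmod) (Q : 'M_(hdim M, hdim N)) :
  hmod_hom N M Q -> (1%:M <= Q^T)%MS -> hdim M = hdim N -> hiso M N.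
Proof.
move=> [xQ gQ]; rewrite sub1mx => fullQ dimMN.
have [P PQ] := row_fullP fullQ.
have QP : Q *m P^T = 1%:M by rewrite -[Q]trmxK -trmx_mul PQ trmx1.
have QtP : Q^T *m P = 1%:M.
  have freeQ : row_free Q^T by rewrite /row_free (eqP fullQ) dimMN.
  by apply: (row_free_inj freeQ); rewrite -mulmxA PQ mulmx1 mul1mx.
have PtQ : P^T *m Q = 1%:M by rewrite -[Q]trmxK -trmx_mul QtP trmx1.
exists P^T, Q; split => // [g|].
  by rewrite -[_ *m hact M g]mulmx1 -QP !mulmxA -(mulmxA _ _ Q) gQ mulmxA PtQ mul1mx.
by rewrite -[_ *m hx M]mulmx1 -QP !mulmxA -(mulmxA _ _ Q) xQ mulmxA PtQ mul1mx.
Qed.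

Lemma hdim_dsum_seq (Ns : seq hmod) : hdim (hdsum_seq Ns) = (\sum_(N <- Ns) hdim N)%N.
Proof. by elim: Ns => [|N Ns IHNs]; rewrite ?big_nil ?big_cons //= IHNs. Qed.

Lemma hdim_copies c (N : hmod) : hdim (hcopies c N) = (c * hdim N)%N.
Proof. by rewrite /hcopies hdim_dsum_seq big_nseq iter_addn_0 mulnC. Qed.

Lemma iso_of_strings (M : hmod) (S : seq (string k (hdim M))) (I : seq nat)
    (c len : nat -> nat) :
  (forall s, s \in S -> [/\ is_string s, swt s \in I & slen s = len (swt s)]) ->
  (forall i, i \in I -> c i = count (fun s => swt s == i) S) ->
  uniq I -> (1%:M <= string_span S)%MS -> (\sum_(s <- S) slen s)%N = hdim M ->
  hiso M (hdsum_seq [seq hcopies (c i) (Vmod chi (len i) (fun g => chi g ^+ i)) | i <- I]).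
Proof.
move=> strS c_count uI fullS sum_lenS.
pose S_ i := [seq s <- S | swt s == i].
have [i Ii | Q homQ spanQ] := @hom_dsum_seq M _ I
    (fun i => hcopies (c i) (Vmod chi (len i) (fun g => chi g ^+ i))) S_.
  rewrite c_count // -size_filter; apply: hom_copies => s.
  by rewrite mem_filter => /andP[/eqP <- /strS[]].
apply: iso_of_hom homQ _ _.
  apply: submx_trans fullS (submx_trans (string_span_subset _) spanQ) => s Ss.
  apply/flattenP; exists (S_ (swt s)); last by rewrite mem_filter eqxx.
  by apply: map_f; have [] := strS s Ss.
rewrite hdim_dsum_seq big_map -sum_lenS (sum_over_fibres (f := @swt k _) _ uI).
  apply: eq_big_seq => i Ii; rewrite hdim_copies c_count // -sum1_count big_distrl /=.
  rewrite big_seq_cond [RHS]big_seq_cond; apply: eq_bigr => s /andP[/strS[_ _ ->] /eqP ->].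
  by rewrite mul1n.
by move=> s /strS[].
Qed.

End Strings.

Arguments weight_vec {k G} M l z.
Arguments hmod_hom {k G} N M Q.
Section TensorStep.
Variables (k : fieldType) (G : groupType) (a : G) (chi : G -> k).
Local Notation hmod := (hmod k G).
Local Notation V := (Vmod chi 2 (@eps k G)).
Local Notation p := (chi a).

Lemma Vmod_act_delta t l g (i : 'I_t) :
  hact (Vmod chi t l) g *m delta_mx i 0 = (chi g ^+ i * l g) *: (delta_mx i 0 : 'cV_t).
Proof.
apply/colP => r; rewrite -colE !mxE eq_sym andbT.
by case: eqP => [-> | _]; rewrite ?mulr1 ?mulr0.
Qed.

Definition e0 : 'cV[k]_2 := delta_mx 0 0.
Definition e1 : 'cV[k]_2 := delta_mx 1 0.

Lemma hxV_e0 : hx V *m e0 = e1.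
Proof. by apply/colP => r; rewrite -colE !mxE; case: r => [[|[|]]]. Qed.

Lemma hxV_e1 : hx V *m e1 = 0.
Proof. by apply/colP => r; rewrite -colE !mxE; case: r => [[|[|]]]. Qed.

Lemma weight_vec_e0 : weight_vec V (fun=> 1) e0.
Proof. by move=> g; rewrite Vmod_act_delta mulr1. Qed.

Lemma weight_vec_e1 : weight_vec V chi e1.
Proof. by move=> g; rewrite Vmod_act_delta mulr1. Qed.

Lemma weight_vec_kron (M N : hmod) l l' l'' u e :
  (forall g, l g * l' g = l'' g) -> weight_vec M l u -> weight_vec N l' e ->
  weight_vec (htens a M N) l'' (kronv u e).
Proof.
by move=> ll' wu we g; rewrite /= kron_mulv wu we kronvZl kronvZr scalerA ll'.
Qed.

Definition qint n := \sum_(i < n) p ^+ i.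

Lemma qint0 : qint 0 = 0.
Proof. exact: big_ord0. Qed.

Lemma qintS n : qint n.+1 = 1 + p * qint n.
Proof.
rewrite /qint big_ord_recl expr0 mulr_sumr; congr (_ + _).
by apply: eq_bigr => i _; rewrite lift0 exprS.
Qed.

Lemma qintSr n : qint n.+1 = qint n + p ^+ n.
Proof. exact: big_ord_recr. Qed.

Lemma qint_neq0 n : p ^+ n != 1 -> qint n != 0.
Proof. by apply: contra => /eqP qn0; rewrite -subr_eq0 subrX1 -/(qint n) qn0 mulr0. Qed.

Section TensorWithV.
Variable M : hmod.
Local Notation T := (htens a M V).
Local Notation x := (hx M).

Lemma hxT_kron (u : 'cV[k]_(hdim M)) (e : 'cV[k]_2) :
  hx T *m kronv u e = kronv (x *m u) (hact V a *m e) + kronv u (hx V *m e).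
Proof. by rewrite /= mulmxDl !kron_mulv mul1mx. Qed.

Lemma mxiter_kron_e0 n (v : 'cV[k]_(hdim M)) :
  mxiter (hx T) n (kronv v e0) =
  kronv (mxiter x n v) e0 + qint n *: kronv (mxiter x n.-1 v) e1.
Proof.
elim: n => [|n IHn]; first by rewrite qint0 scale0r addr0.
rewrite mxiterS IHn mulmxDr -scalemxAr !hxT_kron.
rewrite hxV_e0 hxV_e1 kronv0r !addr0 (Vmod_act_delta _ _ 0) (Vmod_act_delta _ _ 1).
rewrite /eps !mulr1 expr0 expr1 !kronvZr scale1r scalerA -/e0 -/e1 -addrA.
case: n {IHn} => [|n]; first by rewrite qint0 mul0r scale0r addr0 qintS qint0 mulr0 addr0 scale1r.
by rewrite -{1}[kronv _ e1]scale1r -scalerDl mulrC -qintS.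
Qed.

Lemma mxiter_kron_e1 n (v : 'cV[k]_(hdim M)) :
  mxiter (hx T) n (kronv v e1) = p ^+ n *: kronv (mxiter x n v) e1.
Proof.
elim: n => [|n IHn]; first by rewrite scale1r.
rewrite mxiterS IHn -scalemxAr hxT_kron hxV_e1 kronv0r addr0 (Vmod_act_delta _ _ 1).
by rewrite /eps expr1 mulr1 kronvZr scalerA -exprSr.
Qed.

Definition string_up (s : string k (hdim M)) : string k (hdim T) :=
  String (kronv (svec s) e0) (slen s).+1 (swt s).

(* Chosen so that x^(t-1) kills it: both of its components then become
   multiples of x^(t-1) v (x) e1, with the same coefficient [t-1] p^(t-1). *)
Definition string_down (s : string k (hdim M)) : string k (hdim T) :=
  let t := (slen s).-1 in
  String (p ^+ t *: kronv (x *m svec s) e0 - qint t *: kronv (svec s) e1) t (swt s).+1.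

Definition tens_strings (s : string k (hdim M)) : seq (string k (hdim T)) :=
  string_up s :: (if (1 < slen s)%N then [:: string_down s] else [::]).

Lemma mxiter_string_down n (s : string k (hdim M)) (t := (slen s).-1) (v := svec s) :
  mxiter (hx T) n (svec (string_down s)) =
  p ^+ t *: kronv (mxiter x n.+1 v) e0
  + (p ^+ t * qint n - qint t * p ^+ n) *: kronv (mxiter x n v) e1.
Proof.
rewrite [svec _]/= mxiterD -scaleNr !mxiterZ mxiter_kron_e0 mxiter_kron_e1 -!mxiterSr.
rewrite scalerDr !scalerA mulNr.
case: n => [|n]; first by rewrite qint0 mulr0 scale0r addr0 sub0r.
by rewrite -addrA -scalerDl.
Qed.

Lemma is_string_up s : is_string chi s -> is_string chi (string_up s).
Proof.
case: s => v t w [/= xtv0 wv]; split => [|j]; rewrite mxiter_kron_e0.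
  by rewrite (mxiter_eq0 xtv0 (leqnSn t)) xtv0 !kronv0l scaler0 addr0.
apply: weight_vecD; first by apply: weight_vec_kron weight_vec_e0 => // g; rewrite mulr1.
case: j => [|j]; first by rewrite qint0 scale0r => g; rewrite mulmx0 scaler0.
by apply/weight_vecZ/weight_vec_kron/weight_vec_e1 => // g; rewrite addnS exprSr.
Qed.

Lemma is_string_down s : is_string chi s -> is_string chi (string_down s).
Proof.
case: s => v t w [/= xtv0 wv]; split => [|j]; rewrite mxiter_string_down.
  by rewrite (mxiter_eq0 xtv0 (leqSpred t)) kronv0l scaler0 add0r mulrC subrr scale0r.
apply: weight_vecD; apply: weight_vecZ.
  by apply: weight_vec_kron (wv j.+1) weight_vec_e0 => g; rewrite mulr1 addSnnS.
by apply: weight_vec_kron (wv j) weight_vec_e1 => g; rewrite /= addSn exprS mulrC.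
Qed.

Lemma string_up_span s n : (n <= slen s)%N ->
  ((kronv (mxiter x n (svec s)) e0 + qint n *: kronv (mxiter x n.-1 (svec s)) e1)^T
    <= string_span (tens_strings s))%MS.
Proof. by move=> le_ns; rewrite -mxiter_kron_e0 (mxiter_string_span (s := string_up s)) ?mem_head. Qed.

Lemma string_down_span s n (t := (slen s).-1) (v := svec s) : (n.+1 < slen s)%N ->
  ((p ^+ t *: kronv (mxiter x n.+1 v) e0
    + (p ^+ t * qint n - qint t * p ^+ n) *: kronv (mxiter x n v) e1)^T
    <= string_span (tens_strings s))%MS.
Proof.
move=> lt_n1s; rewrite -mxiter_string_down (mxiter_string_span (s := string_down s)) ?ltn_predRL //.
by rewrite /tens_strings (leq_ltn_trans (ltn0Sn n) lt_n1s) !inE eqxx orbT.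
Qed.

(* The orbit vectors of the two strings at step n form a 2 x 2 system in
   x^(n+1) v (x) e0 and x^n v (x) e1 with determinant -p^n [t]. *)
Lemma tens_strings_span_pair s n : p != 0 -> qint (slen s) != 0 -> (n.+1 < slen s)%N ->
  ((kronv (mxiter x n.+1 (svec s)) e0)^T <= string_span (tens_strings s))%MS &&
  ((kronv (mxiter x n (svec s)) e1)^T <= string_span (tens_strings s))%MS.
Proof.
move=> p_neq0 qt_neq0 lt_n1s.
have sA := string_up_span (ltnW lt_n1s); have sB := string_down_span lt_n1s.
rewrite !linearD !linearZ /= in sA sB; apply: submx_solve2 sA sB.
have -> : (p ^+ (slen s).-1 * qint n - qint (slen s).-1 * p ^+ n)
          - p ^+ (slen s).-1 * qint n.+1 = - (p ^+ n * qint (slen s)).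
  by rewrite -(ltn_predK lt_n1s) qintSr /= qintSr; ring.
by rewrite oppr_eq0 mulf_neq0 ?expf_neq0.
Qed.

Lemma tens_strings_span s j : p != 0 -> mxiter x (slen s) (svec s) = 0 ->
  qint (slen s) != 0 -> (j < slen s)%N ->
  ((kronv (mxiter x j (svec s)) e0)^T <= string_span (tens_strings s))%MS /\
  ((kronv (mxiter x j (svec s)) e1)^T <= string_span (tens_strings s))%MS.
Proof.
move=> p_neq0 xtv0 qt_neq0 lt_js; split.
  case: j lt_js => [|n] lt_n1s; last by case/andP: (tens_strings_span_pair p_neq0 qt_neq0 lt_n1s).
  by have := string_up_span (leq0n (slen s)); rewrite qint0 scale0r addr0.
case: (ltnP j.+1 (slen s)) => [lt_j1s | le_sj1].
  by case/andP: (tens_strings_span_pair p_neq0 qt_neq0 lt_j1s).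
have sj : slen s = j.+1 by apply/eqP; rewrite eqn_leq le_sj1 lt_js.
have := string_up_span (leqnn (slen s)); rewrite xtv0 kronv0l add0r linearZ /=.
by rewrite (eqmx_scale _ qt_neq0) sj.
Qed.

Lemma full_span_tens_strings (S : seq (string k (hdim M))) : p != 0 ->
  (forall s, s \in S -> mxiter x (slen s) (svec s) = 0 /\ qint (slen s) != 0) ->
  (1%:M <= string_span S)%MS -> (1%:M <= string_span (flatten (map tens_strings S)))%MS.
Proof.
move=> p_neq0 S_ok fullS; apply: (row_full_kronr fullS) => b.
apply: string_span_mulr_sub => s Ss; apply/row_subP => j; rewrite row_mul.
have -> : row j (string_mx s)^T = (mxiter x j (svec s))^T by apply/rowP => i; rewrite !mxE.
rewrite mul_kronr.
have sub_tens : (string_span (tens_strings s) <= string_span (flatten (map tens_strings S)))%MS.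
  by apply: string_span_subset => z kz; apply/flattenP; exists (tens_strings s); rewrite ?map_f.
have [xtv0 qt_neq0] := S_ok s Ss.
have [span_e0 span_e1] := tens_strings_span p_neq0 xtv0 qt_neq0 (ltn_ord j).
case: b => [[|[|//]]] lt_b2; apply: submx_trans sub_tens.
  by rewrite (_ : delta_mx _ _ = e0) //; congr delta_mx; apply: val_inj.
by rewrite (_ : delta_mx _ _ = e1) //; congr delta_mx; apply: val_inj.
Qed.

End TensorWithV.
End TensorStep.

Section TensorPower.
Variables (k : fieldType) (G : groupType) (a : G) (chi : G -> k).
Local Notation V := (Vmod chi 2 (@eps k G)).
Local Notation p := (chi a).
Local Notation tens_strings := (tens_strings a chi (M := _)).

Lemma hdim_htpow m : hdim (htpow a chi V m) = (2 ^ m)%N.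
Proof. by elim: m => //= m ->; rewrite expnSr. Qed.

Lemma count_weight_tens_strings (M : hmod k G) (S : seq (string k (hdim M))) w :
  count (fun s => swt s == w) (flatten (map tens_strings S)) =
  (count (fun s => swt s == w) S
   + if w is w'.+1 then count (fun s => (swt s == w') && (1 < slen s)) S else 0)%N.
Proof.
elim: S => [|s S IHS]; first by case: w.
rewrite /= count_cat IHS /tens_strings /=; case: ifP => lt1s; case: w {IHS} => [|w] /=;
  rewrite ?eqSS ?lt1s ?andbT ?andbF; lia.
Qed.

Lemma sum_slen_tens_strings (M : hmod k G) (S : seq (string k (hdim M))) :
  (forall s, s \in S -> 0 < slen s)%N ->
  (\sum_(s <- flatten (map tens_strings S)) slen s = (\sum_(s <- S) slen s) * 2)%N.
Proof.
elim: S => [|s S IHS] S_pos; first by rewrite !big_nil.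
have -> : flatten (map tens_strings (s :: S)) = tens_strings s ++ flatten (map tens_strings S) by [].
rewrite big_cat big_cons IHS => [|s' S's']; last first.
  by rewrite S_pos // in_cons S's' orbT.
have := S_pos s (mem_head s S); rewrite /tens_strings; case: ifP => lt1s pos_s;
  rewrite !big_cons ?big_nil /=; lia.
Qed.

Lemma count_long_strings n m (S : seq (string k n)) w :
  (forall s, s \in S -> slen s + (swt s).*2 = m.+1)%N ->
  count (fun s => (swt s == w) && (1 < slen s)%N) S =
  ((w.*2 < m) * count (fun s => swt s == w) S)%N.
Proof.
move=> S_shape; rewrite (@eq_in_count _ _ (fun s => (swt s == w) && (w.*2 < m)%N)).
  by case: (w.*2 < m)%N; [under eq_count do rewrite andbT | under eq_count do rewrite andbF];
    rewrite ?mul1n ?count_pred0.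
move=> s /S_shape; case: eqP => // -> /=; move: (slen s) => t shape_s.
by apply/idP/idP; lia.
Qed.

Definition string_decomposition m (S : seq (string k (hdim (htpow a chi V m)))) :=
  [/\ forall s, s \in S -> [/\ is_string chi s, 0 < slen s & slen s + (swt s).*2 = m.+1]%N,
      forall w, count (fun s => swt s == w) S = ballot m w,
      (\sum_(s <- S) slen s = 2 ^ m)%N &
      (1%:M <= string_span S)%MS].
Arguments string_decomposition : clear implicits.

Lemma string_decomposition0 : exists S, string_decomposition 0%N S.
Proof.
have x0 : hx (htpow a chi V 0) = 0 by apply/matrixP => i j; rewrite !ord1 !mxE.
exists [:: String 1%:M 1 0]; split => [s | w | | ].
- rewrite mem_seq1 => /eqP -> /=; split=> //; split=> [|j g]; first by rewrite mxiterS x0 mul0mx.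
  case: j => [|j]; last by rewrite mxiterS x0 mul0mx mulmx0 scaler0.
  by apply/matrixP => i i'; rewrite !ord1 !mxE big_ord1 !mxE /eps expr0 !mulr1.
- by rewrite ballot0 /= addn0 eq_sym.
- by rewrite big_seq1.
rewrite string_span_cons; apply: submx_trans (addsmxSl _ _); rewrite genmxE.
by rewrite (_ : _^T = 1%:M) //; apply/matrixP => i j; rewrite !ord1 !mxE.
Qed.

Lemma string_decompositionS m S : p != 0 ->
  (forall n, (0 < n <= m.+1)%N -> p ^+ n != 1) ->
  string_decomposition m S -> string_decomposition m.+1 (flatten (map tens_strings S)).
Proof.
move=> p_neq0 p_pow [S_str S_count S_sum S_full]; split.
- move=> s' /flattenP[_ /mapP[s Ss ->]]; have [str_s pos_s shape_s] := S_str s Ss.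
  rewrite /tens_strings in_cons => /predU1P[-> | ].
    by split; [exact: is_string_up | | rewrite /=; lia].
  case: ifP => // lt1s; rewrite mem_seq1 => /eqP ->.
  by split; [exact: is_string_down | rewrite /=; lia ..].
- case=> [|w]; rewrite count_weight_tens_strings S_count ?addn0 ?ballotS0 //.
  by rewrite ballotSS (count_long_strings (m := m)) ?S_count // => s /S_str[].
- by rewrite sum_slen_tens_strings ?S_sum ?expnSr // => s /S_str[].
apply: full_span_tens_strings p_neq0 _ S_full => s /S_str[[xtv0 _] pos_s shape_s].
by split=> //; apply/qint_neq0/p_pow; lia.
Qed.

Lemma string_decomposition_exists m : p != 0 ->
  (forall n, (0 < n <= m)%N -> p ^+ n != 1) -> exists S, string_decomposition m S.
Proof.
move=> p_neq0; elim: m => [|m IHm] p_pow; first exact: string_decomposition0.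
have [n /andP[n_gt0 le_nm] | S decS] := IHm; first by apply: p_pow; rewrite n_gt0 ltnW.
by exists (flatten (map tens_strings S)); apply: string_decompositionS.
Qed.

End TensorPower.

Theorem lemma4p2 (k : closedFieldType) (G : groupType) (a : G) (chi : G -> k)
    (m : nat) :
  [pchar k] =i pred0 ->
  (forall g : G, (a * g)%g = (g * a)%g) ->
  is_char chi ->
  chi a != 1 ->
  (* m < |q| where q = chi^{-1}(a): q^n <> 1 for 1 <= n <= m *)
  (forall n : nat, (0 < n <= m)%N -> ((chi a)^-1) ^+ n != 1) ->
  hiso (htpow a chi (Vmod chi 2 (@eps k G)) m)
       (hdsum_seq
          [seq hcopies (((m - 2 * i + 1) * 'C(m, i)) %/ (m - i + 1))%N
                       (Vmod chi (m + 1 - 2 * i)%N (fun g => chi g ^+ i))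
          | i <- iota 0 (m./2).+1]).
Proof.
move=> _ _ [_ chi_neq0] _ q_pow_neq1.
have p_pow_neq1 n : (0 < n <= m)%N -> chi a ^+ n != 1.
  by move/q_pow_neq1; rewrite exprVn invr_eq1.
have [S [S_str S_count S_sum S_full]] :=
  string_decomposition_exists (chi_neq0 a) p_pow_neq1.
have half_m i : (i \in iota 0 (m./2).+1) = (i.*2 <= m)%N.
  by rewrite mem_iota ltnS geq_half_double.
apply: (iso_of_strings (S := S)); rewrite ?iota_uniq //; last by rewrite S_sum hdim_htpow.
  by move=> s /S_str[str_s pos_s shape_s]; rewrite half_m; split=> //; lia.
by move=> i; rewrite half_m S_count => /ballot_div.
Qed.
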